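(* In the setting below, the rank of the free abelian group $\bar A_{\mathfrak{ab}}/\bar\rho_{\mathfrak{ab}}(\bar G_{\mathfrak{ab}})$ is $\sum_{i=1}^m|S_i|-n-m+c$, where $c$ is the number of connected components of the graph $\Lambda_{\mathcal X}$.
   Context: Let $G$ be a group generated by $a_1,\dots,a_n$ with $z=a_1\cdots a_n$ central. Let $\mathcal X=\{S_1,\dots,S_m\}$ with $S_i\subseteq\{1,\dots,n\}$ and $|S_i\cap S_r|\le1$ for $i\neq r$. For $S\subseteq\{1,\dots,n\}$ let $G_S$ be the quotient of $G$ by the normal closure of $\{a_j:j\notin S\}$; let $a_{ij}$ be the image of $a_j$ in $G_{S_i}$ and $z_i=a_{i1}\cdots a_{in}$ (central in $G_{S_i}$). Let $\bar G=G/\langle z\rangle$, $\bar G_{S_i}=G_{S_i}/\langle z_i\rangle$, and assume each $\bar G_{S_i}$ is free of rank $|S_i|-1$, the images of any $|S_i|-1$ of the $a_{ij}$, $j\in S_i$, forming a free basis. Let $A=\prod_iG_{S_i}$, $\bar A=\prod_i\bar G_{S_i}$, $\rho\colon G\to A$ the product of projections and $\bar\rho\colon\bar G\to\bar A$ the induced map. Assume $G_{\mathfrak{ab}}$ and $A_{\mathfrak{ab}}$ are free abelian with bases the images of $a_1,\dots,a_n$ and of $a_{ij}$ ($1\le i\le m$, $j\in S_i$) respectively; $\mathfrak{ab}$ denotes abelianization. $\Lambda_{\mathcal X}$ is the bipartite graph with vertex set $\{S_1,\dots,S_m\}\sqcup\{1,\dots,n\}$ and an edge $\{S_i,j\}$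 for each $j\in S_i$. *)

(* Quotients G/N are handled
   through their universal property: homomorphisms out of G/N are the
   homomorphisms out of G that kill N (and the projection G -> G/N is onto,
   so uniqueness on G/N is uniqueness on G). *)
From mathcomp Require Import all_boot.
Set Implicit Arguments.
Unset Strict Implicit.
Unset Printing Implicit Defensive.

Local Open Scope group_scope.

Section GroupDefs.
Variable G : groupType.

Definition is_subgroup (S : G -> Prop) : Prop :=
  S 1 /\ (forall x y, S x -> S y -> S (x / y)).

Definition is_normal (N : G -> Prop) : Prop :=
  is_subgroup N /\ (forall x y, N x -> N (x ^ y)).

Definition gen_sub (Y : G -> Prop) (g : G) : Prop :=
  forall S, is_subgroup S -> (forall x, Y x -> S x) -> S g.

Definition ncl (Y : G -> Prop) (g : G) : Prop :=
  forall N, is_normal N -> (forall x, Y x -> N x) -> N g.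

Definition is_central (x : G) : Prop := forall y : G, commute x y.

End GroupDefs.

Definition ghom (G H : groupType) (f : G -> H) : Prop :=
  forall x y, f (x * y) = f x * f y.

Definition kills (G H : groupType) (f : G -> H) (N : G -> Prop) : Prop :=
  forall g, N g -> f g = 1.

Definition abelian_grp (H : groupType) : Prop := forall x y : H, commute x y.

(* The images in G/N of the family (b i)_{i in P} form a free basis of the
   group G/N  (universal property of the free group on that family). *)
Definition free_basis_mod (G : groupType) (N : G -> Prop)
  (I : Type) (b : I -> G) (P : I -> bool) : Prop :=
  forall (H : groupType) (h : I -> H),
    exists f : G -> H, [/\ ghom f, kills f N, (forall i, P i -> f (b i) = h i)
      & forall f' : G -> H, ghom f' -> kills f' N ->
          (forall i, P i -> f' (b i) = h i) -> forall g, f' g = f g].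

(* The images in (G/N)_ab of the family (b i)_{i in P} form a free basis of
   the free abelian group (G/N)_ab  (universal property among abelian groups;
   homomorphisms from (G/N)_ab to an abelian H are homomorphisms G -> H
   killing N). *)
Definition free_ab_basis_mod (G : groupType) (N : G -> Prop)
  (I : Type) (b : I -> G) (P : I -> bool) : Prop :=
  forall (H : groupType) (h : I -> H), abelian_grp H ->
    exists f : G -> H, [/\ ghom f, kills f N, (forall i, P i -> f (b i) = h i)
      & forall f' : G -> H, ghom f' -> kills f' N ->
          (forall i, P i -> f' (b i) = h i) -> forall g, f' g = f g].

Section Setting.
Variables (G : groupType) (n m : nat) (a : 'I_n -> G) (X : 'I_m -> {set 'I_n}).

Definition zprod : G := \prod_(j < n) a j.

(* kernel of G -> G_S : normal closure of {a_j : j \notin S} *)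
Definition kerS (S : {set 'I_n}) : G -> Prop :=
  ncl (fun g => exists2 j, j \notin S & g = a j).

(* kernel of G -> bar G_S = G_S / <z_S> : normal closure of
   {a_j : j \notin S} together with z *)
Definition kerSbar (S : {set 'I_n}) : G -> Prop :=
  ncl (fun g => (exists2 j, j \notin S & g = a j) \/ g = zprod).

(* A = prod_i G_{S_i} is the quotient of the group {ffun 'I_m -> G} = G^m by
   the normal subgroup prod_i ker(G -> G_{S_i}) *)
Definition kerA : {ffun 'I_m -> G} -> Prop := fun x : {ffun 'I_m -> G} => forall i, kerS (X i) (x i).

(* a_{ij} : the image of a_j in the i-th factor G_{S_i} of A *)
Definition aij (ij : 'I_m * 'I_n) : {ffun 'I_m -> G} :=
  [ffun k => if k == ij.1 then a ij.2 else 1].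

(* bar A_ab / bar rho_ab(bar G_ab) is the quotient of G^m by the normal
   closure of: prod_i ker(G -> bar G_{S_i}), the commutators of G^m, and the
   diagonal image rho(G) = {(g,...,g)} (images of g in each factor). *)
Definition kerQ : {ffun 'I_m -> G} -> Prop :=
  ncl (fun x : {ffun 'I_m -> G} => [\/ forall i, kerSbar (X i) (x i),
                    exists x1 x2 : {ffun 'I_m -> G}, x = [~ x1, x2]
                  | exists g : G, x = [ffun => g]]).
End Setting.

Definition lam_rel (n m : nat) (X : 'I_m -> {set 'I_n}) : rel ('I_m + 'I_n) :=
  fun u v => match u, v with
             | inl i, inr j => j \in X i
             | inr j, inl i => j \in X i
             | _, _ => false
             end.

(* number of connected components of Lambda_X (lam_rel is symmetric, so
   [roots] picks one representative per connected component) *)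
Definition n_components (n m : nat) (X : 'I_m -> {set 'I_n}) : nat :=
  #|roots (lam_rel X)|.

From HB Require Import structures.
From mathcomp Require Import all_boot ssralg.
Set Implicit Arguments. Unset Strict Implicit. Unset Printing Implicit Defensive.
Import GRing.Theory.

(* Write [Q] for [bar A_ab / bar rho_ab (bar G_ab)], the quotient of [G^m] by
   [kerQ].  For an abelian group [H], homomorphisms [Q -> H] are exactly the
   [H]-valued circulations on [Lambda_X], with its edges oriented from [S_i] to
   [j]: a homomorphism is recorded by its values on the generators [a_ij], the
   relation [z_i = 1] says that the flow out of [S_i] vanishes and killing the
   diagonal image of [a_j] says that the flow into [j] vanishes; conversely,
   freeness of [bar G_{S_i}] realises any circulation.  Circulations on a
   finite graph are freely determined by their values on the edges outside a
   spanning forest, obtained by deleting edges that lie on cycles, and there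
   are [#|E| - #|V| + c] of them, i.e. [sum_i |S_i| - n - m + c]. *)

Section UndirectedGraph.
Variable T : finType.
Implicit Types (E F : {set T * T}) (e : T * T).

Definition adj E : rel T := fun x y => ((x, y) \in E) || ((y, x) \in E).

Lemma connect_adj_sym E : connect_sym (adj E).
Proof. by apply: sym_connect_sym => x y; rewrite /adj orbC. Qed.

Lemma connect_adjS E F : E \subset F -> subrel (connect (adj E)) (connect (adj F)).
Proof.
move=> /subsetP sEF; apply: connect_sub => x y /orP[/sEF|/sEF] xy; apply: connect1.
  by rewrite /adj xy.
by rewrite /adj xy orbT.
Qed.

Lemma connect_adjD1 E e : subrel (connect (adj (E :\ e))) (connect (adj E)).
Proof. exact/connect_adjS/subsetDl. Qed.

Lemma adj_edge E e : e \in E -> adj E e.1 e.2.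
Proof. by rewrite /adj -surjective_pairing => ->. Qed.

Lemma eq_card_roots (r r' : rel T) : connect r =2 connect r' -> #|roots r| = #|roots r'|.
Proof. by move=> rr'; apply: eq_card => x; rewrite !inE /roots /root (eq_pick (rr' x)). Qed.

Lemma card_roots_adj0 : #|roots (adj set0)| = #|T|.
Proof.
apply: eq_card => x; rewrite !inE /roots.
case/connectP: (connect_root (adj set0) x) => -[|y p] /=.
  by move=> _ rx; rewrite [in X in X == _]rx eqxx.
by rewrite /adj !in_set0.
Qed.

Lemma adjD1P E e x y : e \in E -> adj E x y ->
  [\/ adj (E :\ e) x y, (x, y) = e | (y, x) = e].
Proof.
move=> eE; rewrite /adj !inE.
case: (eqVneq (x, y) e) => [-> _|_]; first by constructor 2.
case: (eqVneq (y, x) e) => [-> _|_]; first by constructor 3.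
by constructor 1.
Qed.

Lemma connect_adjD1_cycle E e : e \in E -> connect (adj (E :\ e)) e.2 e.1 ->
  connect (adj E) =2 connect (adj (E :\ e)).
Proof.
case: e => u v /= eE c21 x y; apply/idP/idP; last exact: connect_adjD1.
apply: connect_sub x y => x y /(adjD1P eE) [|[-> ->]|[-> ->]] //; first exact: connect1.
by rewrite connect_adj_sym.
Qed.

Lemma connect_adjD1P E e x y : e \in E -> connect (adj E) x y ->
  [|| connect (adj (E :\ e)) x y,
      connect (adj (E :\ e)) x e.1 && connect (adj (E :\ e)) e.2 y
    | connect (adj (E :\ e)) x e.2 && connect (adj (E :\ e)) e.1 y].
Proof.
move=> eE /connectP[p pp ->].
elim/last_ind: p pp => [|p z IH]; first by rewrite /= connect0.
rewrite rcons_path last_rcons => /andP[/IH + wz]; set w := last x p in wz *.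
case/(adjD1P eE): wz => [wz|<-|<-] /=.
- have cwz : connect (adj (E :\ e)) w z := connect1 wz.
  case/or3P => [xw|/andP[-> ew]|/andP[-> ew]].
  + by rewrite (connect_trans xw cwz).
  + by rewrite (connect_trans ew cwz) orbT.
  + by rewrite (connect_trans ew cwz) !orbT.
- by case/or3P => [-> | /andP[-> _] | /andP[-> _]]; rewrite ?connect0 ?orbT.
- by case/or3P => [-> | /andP[-> _] | /andP[-> _]]; rewrite ?connect0 ?orbT.
Qed.

(* [root (adj E)] maps the components of [E :\ e] other than that of [e.2]
   bijectively onto those of [E]. *)
Lemma card_roots_adjD1_bridge E e : e \in E -> ~~ connect (adj (E :\ e)) e.2 e.1 ->
  #|roots (adj (E :\ e))| = #|roots (adj E)|.+1.
Proof.
move=> eE nc; set r' := adj (E :\ e); set r := adj E.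
have sym' := connect_adj_sym (E :\ e); have sym := connect_adj_sym E.
set A := [set x | roots r' x]; set u := root r' e.1; set v := root r' e.2.
have vA : v \in A by rewrite inE roots_root.
have uv : u != v.
  by apply: contra nc => /eqP/(rootP sym'); rewrite sym'.
have rootA x : x \in A -> root r' x = x by rewrite inE => /eqP.
rewrite -[LHS]cardsE (cardsD1 v) vA add1n; congr _.+1.
have inj_root : {in A :\ v &, injective (root r)}.
  move=> x y /setD1P[xv xA] /setD1P[yv yA] /(rootP sym) /(connect_adjD1P eE).
  case/or3P => [xy|/andP[_ ey]|/andP[ex _]].
  - by rewrite -(rootA _ xA) -(rootA _ yA); apply/(rootP sym').
  - by case/eqP: yv; rewrite -(rootA _ yA); apply/(rootP sym'); rewrite sym'.
  - by case/eqP: xv; rewrite -(rootA _ xA); apply/(rootP sym').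
rewrite -(card_in_imset inj_root); apply: eq_card => y; rewrite inE.
apply/imsetP/idP => [[x _ ->]|/eqP ry]; first exact: roots_root.
have yr'y : connect r y (root r' y) by apply/connect_adjD1/connect_root.
case: (eqVneq (root r' y) v) => [yv|yv].
  exists u; first by rewrite !inE uv roots_root.
  rewrite -ry; apply/(rootP sym); apply: (connect_trans yr'y); rewrite yv.
  apply: (@connect_trans _ _ e.2); first by rewrite sym; apply/connect_adjD1/connect_root.
  apply: (@connect_trans _ _ e.1); first by rewrite sym; exact/connect1/adj_edge.
  exact/connect_adjD1/connect_root.
exists (root r' y); first by rewrite !inE yv roots_root.
by rewrite -{1}ry; apply/(rootP sym).
Qed.

End UndirectedGraph.

Section Circulation.
Variables (T : finType) (V : zmodType).
Local Open Scope ring_scope.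
Implicit Types (E F : {set T * T}) (e : T * T) (t : V) (phi psi : T * T -> V).

Definition outflow E phi x := \sum_(f in E | f.1 == x) phi f.
Definition inflow E phi x := \sum_(f in E | f.2 == x) phi f.
Definition circulation E phi := forall x, outflow E phi x = inflow E phi x.

Lemma outflowD E phi psi x : outflow E (phi \+ psi) x = outflow E phi x + outflow E psi x.
Proof. exact: big_split. Qed.

Lemma inflowD E phi psi x : inflow E (phi \+ psi) x = inflow E phi x + inflow E psi x.
Proof. exact: big_split. Qed.

Lemma circulationD E phi psi :
  circulation E phi -> circulation E psi -> circulation E (phi \+ psi).
Proof. by move=> cphi cpsi x; rewrite outflowD inflowD cphi cpsi. Qed.

Lemma circulationB E phi psi :
  circulation E phi -> circulation E psi -> circulation E (phi \- psi).
Proof.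
by move=> cphi cpsi x; rewrite /outflow /inflow !sumrB; congr (_ - _); [exact: cphi|exact: cpsi].
Qed.

Lemma eq_circulation E phi psi : {in E, phi =1 psi} ->
  circulation E phi <-> circulation E psi.
Proof.
move=> eq_phi; have eq_sum (P : pred (T * T)) :
    \sum_(f in E | P f) phi f = \sum_(f in E | P f) psi f.
  by apply: eq_bigr => f /andP[fE _]; exact: eq_phi.
by split=> c x; move: (c x); rewrite /outflow /inflow !eq_sum.
Qed.

Lemma circulationD1 E e phi : e \in E -> phi e = 0 ->
  circulation E phi <-> circulation (E :\ e) phi.
Proof.
move=> eE phie; have sumD1 (P : pred (T * T)) :
    \sum_(f in E | P f) phi f = \sum_(f in E :\ e | P f) phi f.
  by rewrite !big_mkcondr (big_setD1 _ eE) /= phie if_same add0r.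
by split=> c x; move: (c x); rewrite /outflow /inflow !sumD1.
Qed.

Definition edge_flow e t : T * T -> V := fun f => if f == e then t else 0.

Lemma outflow_edge_flow E e t x : e \in E -> outflow E (edge_flow e t) x = t *+ (e.1 == x).
Proof.
move=> eE; rewrite /outflow big_mkcondr (bigD1 e) //= /edge_flow eqxx big1 ?addr0.
  by case: (e.1 == x).
by move=> f /andP[_ /negbTE ->]; rewrite if_same.
Qed.

Lemma inflow_edge_flow E e t x : e \in E -> inflow E (edge_flow e t) x = t *+ (e.2 == x).
Proof.
move=> eE; rewrite /inflow big_mkcondr (bigD1 e) //= /edge_flow eqxx big1 ?addr0.
  by case: (e.2 == x).
by move=> f /andP[_ /negbTE ->]; rewrite if_same.
Qed.

Definition arc_flow E t x y : T * T -> V :=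
  if (x, y) \in E then edge_flow (x, y) t else edge_flow (y, x) (- t).

Lemma arc_flow_balance E F t x y z : E \subset F -> adj E x y ->
  outflow F (arc_flow E t x y) z - inflow F (arc_flow E t x y) z
    = t *+ (x == z) - t *+ (y == z).
Proof.
move=> /subsetP sEF; rewrite /arc_flow; have [xyE _|xyE xy] := boolP ((x, y) \in E).
  by rewrite outflow_edge_flow ?inflow_edge_flow ?sEF.
have yxE : (y, x) \in E by move: xy; rewrite /adj (negbTE xyE).
by rewrite outflow_edge_flow ?inflow_edge_flow ?sEF //= !mulNrn opprK addrC.
Qed.

Lemma arc_flow_out E t x y f : adj E x y -> f \notin E -> arc_flow E t x y f = 0.
Proof.
rewrite /arc_flow /edge_flow; have [xyE _|xyE xy] := boolP ((x, y) \in E).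
  by case: eqP => // ->; rewrite xyE.
have yxE : (y, x) \in E by move: xy; rewrite /adj (negbTE xyE).
by case: eqP => // ->; rewrite yxE.
Qed.

Fixpoint path_flow E t x (p : seq T) : T * T -> V :=
  if p is y :: q then arc_flow E t x y \+ path_flow E t y q else fun=> 0.

Lemma path_flow_balance E F t x p z : E \subset F -> path (adj E) x p ->
  outflow F (path_flow E t x p) z - inflow F (path_flow E t x p) z
    = t *+ (x == z) - t *+ (last x p == z).
Proof.
move=> sEF; elim: p x => [|y p IH] x /=.
  by rewrite /outflow /inflow !big1 ?subrr.
case/andP=> xy /IH IHp; rewrite outflowD inflowD opprD addrACA IHp.
by rewrite arc_flow_balance // addrA subrK.
Qed.

Lemma path_flow_out E t x p f : path (adj E) x p -> f \notin E -> path_flow E t x p f = 0.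
Proof.
elim: p x => [|y p IH] x //= /andP[xy pp] fE.
by rewrite IH // arc_flow_out // addr0.
Qed.

(* The net outflow of the component of [e.1] in [E :\ e] is carried by [e] alone. *)
Lemma circulation_bridge E e phi : e \in E -> ~~ connect (adj (E :\ e)) e.2 e.1 ->
  circulation E phi -> phi e = 0.
Proof.
move=> eE nc c; set K := connect (adj (E :\ e)) e.1.
have sum_out (s : T * T -> T) :
    \sum_(x in K) \sum_(f in E | s f == x) phi f = \sum_(f in E | s f \in K) phi f.
  rewrite (partition_big s (mem K)) => [|f /andP[]//].
  apply: eq_bigr => x xK; apply: eq_bigl => f; rewrite -andbA.
  by have [->|] := eqVneq (s f) x; rewrite ?xK ?andbF.
have : \sum_(x in K) outflow E phi x = \sum_(x in K) inflow E phi x.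
  by apply: eq_bigr => x _; exact: c.
rewrite /outflow /inflow (sum_out fst) (sum_out snd).
rewrite (bigD1 e) /=; last by rewrite eE inE /K connect0.
set S := (X in _ + X = _) => sum_eq.
apply: (addIr S); rewrite sum_eq add0r; apply: eq_bigl => f; rewrite !inE /K.
have [->|fe] := eqVneq f e; first by rewrite (connect_adj_sym (E :\ e)) (negbTE nc) !andbF.
rewrite andbT; case fE: (f \in E) => //=.
apply: same_connect_r; first exact: connect_adj_sym.
by rewrite connect_adj_sym; apply/connect1/adj_edge; rewrite !inE fe.
Qed.

End Circulation.

Section CirculationBasis.
Variable T : finType.
Implicit Types (E R : {set T * T}) (e : T * T).
Local Open Scope ring_scope.

Definition circulation_basis E R := R \subset E /\ forall V : zmodType,
  (forall w : T * T -> V, exists2 phi, circulation E phi & {in R, phi =1 w}) /\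
  (forall phi : T * T -> V, circulation E phi ->
     {in R, forall f, phi f = 0} -> {in E, forall f, phi f = 0}).

Lemma circulation_extend0 (V : zmodType) E e (phi : T * T -> V) :
  e \in E -> circulation (E :\ e) phi ->
  circulation E (fun f => if f == e then 0 else phi f).
Proof.
move=> eE cphi; apply/(circulationD1 eE); first by rewrite eqxx.
by apply/(eq_circulation _)/cphi => f /setD1P[/negbTE ->].
Qed.

Lemma circulation_basis0 : circulation_basis set0 set0.
Proof.
split=> // V; split=> [w|phi _ _ f]; last by rewrite inE.
by exists (fun=> 0) => [x|f]; rewrite ?inE // /outflow /inflow !big_pred0 // => f; rewrite inE.
Qed.

Lemma circulation_basis_cycle E R e : e \in E -> connect (adj (E :\ e)) e.2 e.1 ->
  circulation_basis (E :\ e) R -> circulation_basis E (e |: R).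
Proof.
move=> eE /connectP[p pp lastp] [sR basisR].
have eR : e \notin R by apply/negP => /(subsetP sR); rewrite !inE eqxx.
split=> [|V]; first by rewrite subUset sub1set eE (subset_trans sR (subsetDl _ _)).
have [extR uniqR] := basisR V; split=> [w|phi cphi phiR f fE].
  (* [psi] sends [w e] around the cycle formed by [e] and a path back from [e.2] to [e.1]. *)
  set t := w e; pose psi := path_flow (E :\ e) t e.2 p \+ edge_flow e t.
  have cpsi : circulation E psi.
    move=> z; apply/eqP; rewrite -subr_eq0 outflowD inflowD opprD addrACA.
    rewrite path_flow_balance ?subsetDl // outflow_edge_flow // inflow_edge_flow //.
    by rewrite -lastp addrA subrK subrr.
  have [phi' cphi' phi'R] := extR (w \- psi).
  exists ((fun f => if f == e then 0 else phi' f) \+ psi) => [|f].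
    exact: circulationD (circulation_extend0 eE cphi') cpsi.
  case/setU1P=> [->|fR] /=.
    by rewrite eqxx add0r /psi /= path_flow_out ?add0r /edge_flow ?eqxx // !inE eqxx.
  have /negbTE-> : f != e by apply: contraNneq eR => <-.
  by rewrite phi'R //= subrK.
have phie : phi e = 0 by apply: phiR; exact: setU11.
have [->//|fe] := eqVneq f e; apply: (uniqR _ (proj1 (circulationD1 eE phie) cphi)).
  by move=> g gR; apply: phiR; rewrite inE gR orbT.
by rewrite in_setD1 fe.
Qed.

Lemma circulation_basis_bridge E R e : e \in E -> ~~ connect (adj (E :\ e)) e.2 e.1 ->
  circulation_basis (E :\ e) R -> circulation_basis E R.
Proof.
move=> eE nc [sR basisR].
have eR : e \notin R by apply/negP => /(subsetP sR); rewrite !inE eqxx.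
split=> [|V]; first exact: subset_trans sR (subsetDl _ _).
have [extR uniqR] := basisR V; split=> [w|phi cphi phiR f fE].
  have [phi' cphi' phi'R] := extR w.
  exists (fun f => if f == e then 0 else phi' f); first exact: circulation_extend0.
  move=> f fR; have /negbTE-> : f != e by apply: contraNneq eR => <-.
  exact: phi'R.
have phie := circulation_bridge eE nc cphi.
have [->//|fe] := eqVneq f e.
by apply: (uniqR _ (proj1 (circulationD1 eE phie) cphi) phiR); rewrite in_setD1 fe.
Qed.

Lemma exists_circulation_basis E : exists2 R, circulation_basis E R &
  (#|R| + #|T| = #|E| + #|roots (adj E)|)%N.
Proof.
move: {2}#|E| (erefl #|E|) => k; elim: k E => [|k IH] E cardE.
  rewrite (cards0_eq cardE); exists set0; first exact: circulation_basis0.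
  by rewrite cards0 card_roots_adj0.
have [e eE] : exists e, e \in E by apply/set0Pn; rewrite -cards_eq0 cardE.
have cardED1 : #|E| = #|E :\ e|.+1 by rewrite (cardsD1 e E) eE.
have [R basisR cardR] : exists2 R, circulation_basis (E :\ e) R &
    (#|R| + #|T| = #|E :\ e| + #|roots (adj (E :\ e))|)%N.
  by apply: IH; move: cardE; rewrite cardED1 => -[].
have [cyc|bridge] := boolP (connect (adj (E :\ e)) e.2 e.1).
  exists (e |: R); first exact: circulation_basis_cycle.
  have eR : e \notin R by apply/negP => /(subsetP basisR.1); rewrite !inE eqxx.
  rewrite cardsU1 eR (eq_card_roots (connect_adjD1_cycle eE cyc)) cardED1.
  by rewrite add1n !addSn cardR.
exists R; first exact: (circulation_basis_bridge eE bridge basisR).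
by rewrite cardR cardED1 card_roots_adjD1_bridge // addnS addSn.
Qed.

End CirculationBasis.

Local Open Scope group_scope.

Section GroupHomomorphisms.
Variables K H : groupType.
Implicit Types f : K -> H.

Lemma ghom1 f : ghom f -> f 1 = 1.
Proof. by move=> hf; apply: (mulIg (f 1)); rewrite -hf !mul1g. Qed.

Lemma ghomV f x : ghom f -> f x^-1 = (f x)^-1.
Proof. by move=> hf; apply: (mulgI (f x)); rewrite -hf !mulgV ghom1. Qed.

Lemma ghom_prod f I (r : seq I) (P : pred I) (F : I -> K) : ghom f ->
  f (\prod_(i <- r | P i) F i) = \prod_(i <- r | P i) f (F i).
Proof. by move=> hf; apply: big_morph; [exact: hf | exact: ghom1]. Qed.

Lemma ghom_eq_gen f f' (Y : K -> Prop) : (forall g, gen_sub Y g) ->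
  ghom f -> ghom f' -> (forall y, Y y -> f y = f' y) -> f =1 f'.
Proof.
move=> genY hf hf' fY g; apply: (genY g (fun g => f g = f' g)) fY.
by split=> [|x y fx fy]; rewrite ?ghom1 // hf hf' !ghomV // fx fy.
Qed.

Lemma kills_ncl f (Y : K -> Prop) : ghom f -> (forall y, Y y -> f y = 1) -> kills f (ncl Y).
Proof.
move=> hf fY g nclYg; apply: (nclYg (fun x => f x = 1)) fY; split; first split.
- exact: ghom1.
- by move=> x y fx fy; rewrite hf ghomV // fx fy invg1 mulg1.
- by move=> x y fx; rewrite conjgE !hf ghomV // fx mul1g mulVg.
Qed.

End GroupHomomorphisms.

Lemma ncl_in (K : groupType) (Y : K -> Prop) y : Y y -> ncl Y y.
Proof. by move=> Yy N _; apply. Qed.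

Lemma ncl1 (K : groupType) (Y : K -> Prop) : ncl Y 1.
Proof. by move=> N [[]]. Qed.

Section FinFunGroup.
Variables (G : groupType) (m : nat).
Local Notation GM := {ffun 'I_m -> G}.

Definition ffun_single (i : 'I_m) (g : G) : GM := [ffun k => if k == i then g else 1].

Lemma ffun_singleM i : {morph ffun_single i : x y / x * y}.
Proof. by move=> x y; apply/ffunP => k; rewrite !ffunE; case: ifP; rewrite ?mulg1. Qed.

Lemma prod_ffun_single (x : GM) : \prod_(i < m) ffun_single i (x i) = x.
Proof.
apply/ffunP => k; have evalM (y z : GM) : (y * z) k = y k * z k by rewrite ffunE.
rewrite (big_morph (fun y : GM => y k) evalM (ffunE _ _)).
under eq_bigr do rewrite ffunE.
by rewrite -big_mkcond (big_pred1 k) // => i; exact: eq_sym.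
Qed.

Lemma ghom_single (H : groupType) (f : GM -> H) i : ghom f -> ghom (f \o ffun_single i).
Proof. by move=> hf x y /=; rewrite ffun_singleM hf. Qed.

End FinFunGroup.

Section IncidenceGraph.
Variables (n m : nat) (X : 'I_m -> {set 'I_n}).
Local Notation VT := ('I_m + 'I_n)%type.

Definition lam_edges : {set VT * VT} :=
  [set f | if f is (inl i, inr j) then j \in X i else false].

Lemma lam_rel_adj : lam_rel X =2 adj lam_edges.
Proof. by move=> [i|j] [i'|j']; rewrite /lam_rel /adj !inE /= ?orbF. Qed.

Lemma big_lam_edges (R : Type) (idx : R) (op : Monoid.com_law idx) (F : VT * VT -> R) :
  \big[op/idx]_(f in lam_edges) F f =
  \big[op/idx]_(i < m) \big[op/idx]_(j in X i) F (inl i, inr j).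
Proof.
pose G u v := if (u, v) \in lam_edges then F (u, v) else idx.
rewrite big_mkcond (eq_bigr (fun f => G f.1 f.2)) => [|[]//].
rewrite -(pair_bigA op G) /G.
rewrite big_sumType /= [X in op _ X]big1 ?Monoid.mulm1 => [|j _]; last first.
  by rewrite big1 // => v _; rewrite inE; case: v.
apply: eq_bigr => i _; rewrite big_sumType /= big1 ?Monoid.mul1m => [|i' _]; last by rewrite inE.
by rewrite [RHS]big_mkcond; apply: eq_bigr => j _; rewrite inE.
Qed.

Lemma card_lam_edges : #|lam_edges| = (\sum_(i < m) #|X i|)%N.
Proof.
rewrite -sum1_card (big_lam_edges (Monoid.ComLaw.clone _ _ addn _)) /=.
by apply: eq_bigr => i _; rewrite sum1_card.
Qed.

Local Open Scope ring_scope.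

Lemma circulation_lamP (V : zmodType) (phi : VT * VT -> V) : circulation lam_edges phi <->
  (forall i, \sum_(j in X i) phi (inl i, inr j) = 0) /\
  (forall j, \sum_(i < m | j \in X i) phi (inl i, inr j) = 0).
Proof.
have out_inl i : outflow lam_edges phi (inl i) = \sum_(j in X i) phi (inl i, inr j).
  rewrite /outflow big_mkcondr big_lam_edges (bigD1 i) //= [X in _ + X]big1 ?addr0.
    by apply: eq_bigr => j _; rewrite eqxx.
  by move=> i' i'i; apply: big1 => j _ /=; rewrite (inj_eq inl_inj) (negbTE i'i).
have out_inr j : outflow lam_edges phi (inr j) = 0.
  by rewrite /outflow big_mkcondr big_lam_edges big1 // => i _; rewrite big1.
have in_inl i : inflow lam_edges phi (inl i) = 0.
  by rewrite /inflow big_mkcondr big_lam_edges big1 // => i' _; rewrite big1.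
have in_inr j : inflow lam_edges phi (inr j) = \sum_(i < m | j \in X i) phi (inl i, inr j).
  rewrite /inflow big_mkcondr big_lam_edges [RHS]big_mkcond; apply: eq_bigr => i _ /=.
  have [jXi|jXi] := boolP (j \in X i).
    rewrite (bigD1 j) //= eqxx big1 ?addr0 // => j' /andP[_ j'j].
    by rewrite (inj_eq inr_inj) (negbTE j'j).
  apply: big1 => j' j'Xi; rewrite (inj_eq inr_inj).
  by case: eqP j'Xi => // ->; rewrite (negbTE jXi).
split=> [c|[rows cols] [i|j]].
- by split=> [i|j]; [rewrite -out_inl c in_inl | rewrite -in_inr -c out_inr].
- by rewrite out_inl in_inl rows.
- by rewrite out_inr in_inr cols.
Qed.

End IncidenceGraph.

Section Quotient.
Variables (G : groupType) (n m : nat) (a : 'I_n -> G) (X : 'I_m -> {set 'I_n}).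
Hypothesis gen_a : forall g : G, gen_sub (fun x => exists j, x = a j) g.
Hypothesis X_neq0 : forall i, (0 < #|X i|)%N.
Hypothesis free_Sbar : forall i j0, j0 \in X i ->
  free_basis_mod (kerSbar a (X i)) a (fun j => (j \in X i) && (j != j0)).
Local Notation GM := {ffun 'I_m -> G}.
Local Notation VT := ('I_m + 'I_n)%type.

Lemma kerSbar_a i j : j \notin X i -> kerSbar a (X i) (a j).
Proof. by move=> jXi; apply: ncl_in; left; exists j. Qed.

Lemma kerSbar_z i : kerSbar a (X i) (zprod a).
Proof. by apply: ncl_in; right. Qed.

Lemma kerQ_single i g : kerSbar a (X i) g -> kerQ a X (ffun_single i g).
Proof.
move=> Kg; apply: ncl_in; apply: Or31 => k.
by rewrite ffunE; case: eqP => [->|_]; last exact: ncl1.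
Qed.

Lemma kerQ_const g : kerQ a X [ffun=> g].
Proof. by apply: ncl_in; apply: Or33; exists g. Qed.

Lemma kills_single (H : groupType) (f : GM -> H) i :
  kills f (kerQ a X) -> kills (f \o ffun_single i) (kerSbar a (X i)).
Proof. by move=> kf g /kerQ_single; exact: kf. Qed.

(* The edge [(S_i, j)] corresponds to the generator [aij a (i, j)] of [A]. *)
Definition edge_elt (f : VT * VT) : GM :=
  if f is (inl i, inr j) then ffun_single i (a j) else 1.

Lemma ghom_eq_lam_edges (H : groupType) (f f' : GM -> H) : ghom f -> ghom f' ->
  kills f (kerQ a X) -> kills f' (kerQ a X) ->
  {in lam_edges X, forall e, f (edge_elt e) = f' (edge_elt e)} -> f =1 f'.
Proof.
move=> hf hf' kf kf' eq_edges x; rewrite -(prod_ffun_single x) !ghom_prod //.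
apply: eq_bigr => i _; apply: (ghom_eq_gen gen_a (ghom_single i hf) (ghom_single i hf')).
move=> _ [j ->] /=; have [jXi|jXi] := boolP (j \in X i).
  by apply: (eq_edges (inl i, inr j)); rewrite inE.
have Kaj : kerQ a X (ffun_single i (a j)) by apply: kerQ_single; exact: kerSbar_a.
by rewrite kf ?kf'.
Qed.

Section AbelianTarget.
Variables (H : groupType) (Hab : abelian_grp H).

Definition ab_zmod (_ : abelian_grp H) : Type := H.
Local Notation HZ := (ab_zmod Hab).
HB.instance Definition _ := Choice.on HZ.
HB.instance Definition _ := GRing.isZmodule.Build HZ (@mulgA H) Hab (@mul1g H) (@mulVg H).

Local Open Scope ring_scope.

Lemma ghom_sum (K : groupType) (f : K -> H) I (r : seq I) (P : pred I) (F : I -> K) :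
  ghom f -> (f (\prod_(i <- r | P i) F i)%g : HZ) = \sum_(i <- r | P i) (f (F i) : HZ).
Proof. by move=> hf; apply: (big_morph (f : K -> HZ)); [exact: hf | exact: ghom1]. Qed.

Lemma ghom_sum_fun (K : groupType) I (r : seq I) (F : I -> K -> H) :
  (forall i, ghom (F i)) -> ghom (fun g => \sum_(i <- r) (F i g : HZ) : H).
Proof.
move=> hF x y; change (\sum_(i <- r) (F i (x * y)%g : HZ)
  = \sum_(i <- r) (F i x : HZ) + \sum_(i <- r) (F i y : HZ)).
by rewrite -big_split; apply: eq_bigr => i _; exact: hF.
Qed.

Lemma sum_kerSbar (F : G -> H) i : ghom F -> kills F (kerSbar a (X i)) ->
  \sum_(j in X i) (F (a j) : HZ) = 0.
Proof.
move=> hF kF; have /(congr1 (fun x : H => x : HZ)) := kF _ (@kerSbar_z i).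
rewrite /zprod ghom_sum // (bigID (mem (X i))) /= [X in _ + X]big1 ?addr0 => [->//|j jXi].
by apply: kF; exact: kerSbar_a.
Qed.

Lemma circulation_of_hom (f : GM -> H) : ghom f -> kills f (kerQ a X) ->
  circulation (lam_edges X) (fun e => f (edge_elt e) : HZ).
Proof.
move=> hf kf; apply/circulation_lamP; split=> [i|j] /=.
  exact: (sum_kerSbar (ghom_single i hf) (kills_single kf)).
have /(congr1 (fun x : H => x : HZ)) := kf _ (kerQ_const (a j)).
rewrite -{1}[[ffun=> a j]]prod_ffun_single ghom_sum // (bigID (fun i => j \in X i)) /=.
rewrite [X in _ + X]big1 ?addr0 => [sum_eq|i jXi].
  by apply: etrans sum_eq; apply: eq_bigr => i _; rewrite ffunE.
by rewrite ffunE; apply: kf; apply: kerQ_single; exact: kerSbar_a.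
Qed.

Lemma factor_hom_of_circulation (phi : VT * VT -> HZ) i : circulation (lam_edges X) phi ->
  exists F : G -> H, [/\ ghom F, kills F (kerSbar a (X i))
    & forall j, j \in X i -> F (a j) = phi (inl i, inr j)].
Proof.
move=> /circulation_lamP[rows _]; have /card_gt0P[j0 j0Xi] := X_neq0 i.
have [F [hF kF Fa _]] := free_Sbar j0Xi (fun j => phi (inl i, inr j) : H).
exists F; split=> // j jXi; have [->|jj0] := eqVneq j j0; last by apply: Fa; rewrite jXi jj0.
(* The value at [j0] is forced by the relation [z = 1] of [bar G_{S_i}]. *)
have Fa_phi : \sum_(j in X i | j != j0) (F (a j) : HZ)
    = \sum_(j in X i | j != j0) phi (inl i, inr j).
  by apply: eq_bigr => k /andP[kXi kj0]; apply: Fa; rewrite kXi kj0.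
have := sum_kerSbar hF kF; rewrite (bigD1 j0) //= Fa_phi => /eqP.
by rewrite -[X in _ == X](rows i) [X in _ == X](bigD1 j0) //= => /eqP/addIr.
Qed.

Lemma hom_of_circulation (phi : VT * VT -> HZ) : circulation (lam_edges X) phi ->
  exists f : GM -> H, [/\ ghom f, kills f (kerQ a X)
    & {in lam_edges X, forall e, f (edge_elt e) = phi e}].
Proof.
move=> cphi; have [F FP] := fin_all_exists (fun i => factor_hom_of_circulation i cphi).
have hF i : ghom (F i) by case: (FP i).
have kF i : kills (F i) (kerSbar a (X i)) by case: (FP i).
have Fa i j : j \in X i -> F i (a j) = phi (inl i, inr j) by case: (FP i) => _ _; apply.
have [_ cols] := proj1 (circulation_lamP X phi) cphi.
have hFi i : ghom (fun x : GM => F i (x i)) by move=> x y; rewrite ffunE hF.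
pose sumF (x : GM) : H := \sum_(i < m) (F i (x i) : HZ).
have hsumF : ghom sumF := ghom_sum_fun _ hFi.
have sumF_single i g : sumF (ffun_single i g) = F i g.
  rewrite /sumF (bigD1 i) //= ffunE eqxx big1 ?addr0 // => k ki.
  by rewrite ffunE (negbTE ki); exact: ghom1.
(* [sumF] kills the diagonal since [G] is generated by the [a j], on which this
   is the relation of [phi] at the vertex [j]. *)
have sumF_const g : sumF [ffun=> g] = 1%g.
  have -> : sumF [ffun=> g] = \sum_(i < m) (F i g : HZ) by apply: eq_bigr => i _; rewrite ffunE.
  apply: (ghom_eq_gen (f' := fun=> 1%g) gen_a (ghom_sum_fun _ hF)) => [x y|_ [j ->]].
    by rewrite mulg1.
  change (\sum_(i < m) (F i (a j) : HZ) = 0); rewrite (bigID (fun i => j \in X i)) /=.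
  rewrite [X in _ + X]big1 ?addr0 => [|i jXi]; last by apply: kF; exact: kerSbar_a.
  by apply: etrans (cols j); apply: eq_bigr => i; exact: Fa.
exists sumF; split=> //.
  apply: kills_ncl => // y [Ky|[x1 [x2 ->]]|[g ->]] //.
    change (\sum_(i < m) (F i (y i) : HZ) = 0); apply: big1 => i _; exact: (kF i _ (Ky i)).
  by rewrite /commg /conjg !hsumF !ghomV // (Hab (sumF x1)) mulKg mulVg.
by move=> [[i|j] [i'|j']]; rewrite inE //= => jXi; rewrite sumF_single Fa.
Qed.

End AbelianTarget.

Lemma free_ab_basis_kerQ R : circulation_basis (lam_edges X) R ->
  free_ab_basis_mod (kerQ a X) (fun k : 'I_#|R| => edge_elt (enum_val k)) (fun _ => true).
Proof.
move=> [sR basisR] H h Hab; have [extR uniqR] := basisR (ab_zmod Hab).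
pose w (e : VT * VT) : ab_zmod Hab := if [pick k | enum_val k == e] is Some k then h k else 0%R.
have wE k : w (enum_val k) = h k.
  by rewrite /w; case: pickP => [k' /eqP/enum_val_inj->|/(_ k)]; rewrite ?eqxx.
have [phi cphi phiR] := extR w.
have [f [hf kf f_edges]] := hom_of_circulation cphi.
exists f; split=> // [k _|f' hf' kf' f'b].
  have kR : enum_val k \in R := enum_valP k.
  by rewrite f_edges ?phiR ?wE // (subsetP sR).
pose d := ((fun e => f' (edge_elt e) : ab_zmod Hab) \- phi)%R.
have d0 : {in lam_edges X, forall e, d e = 0%R}.
  apply: uniqR; first exact: (circulationB (circulation_of_hom Hab hf' kf') cphi).
  move=> e eR; have [k ->] : exists k : 'I_#|R|, e = enum_val k.
    by exists (enum_rank_in eR e); rewrite enum_rankK_in.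
  by rewrite /d /= f'b // phiR ?enum_valP // wE subrr.
apply: ghom_eq_lam_edges => // e eE; rewrite f_edges //.
by move/eqP: (d0 e eE); rewrite /d /= subr_eq0 => /eqP ->.
Qed.

End Quotient.

Theorem mainTheorem15 (G : groupType) (n m : nat) (a : 'I_n -> G)
    (X : 'I_m -> {set 'I_n}) :
  (forall g : G, gen_sub (fun x => exists j, x = a j) g) ->
  is_central (zprod a) ->
  (forall i r : 'I_m, i != r -> (#|X i :&: X r| <= 1)%N) ->
  (forall i : 'I_m, (0 < #|X i|)%N) ->
  (forall (i : 'I_m) (j0 : 'I_n), j0 \in X i ->
     free_basis_mod (kerSbar a (X i)) a (fun j => (j \in X i) && (j != j0))) ->
  free_ab_basis_mod (fun g : G => g = 1) a (fun _ => true) ->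
  free_ab_basis_mod (kerA a X) (aij a) (fun ij => ij.2 \in X ij.1) ->
  exists r : nat,
    (r + n + m = \sum_(i < m) #|X i| + n_components X)%N /\
    exists b : 'I_r -> {ffun 'I_m -> G},
      free_ab_basis_mod (kerQ a X) b (fun _ => true).
Proof.
move=> gen_a _ _ X_neq0 free_Sbar _ _.
have [R basisR cardR] := exists_circulation_basis (lam_edges X).
exists #|R|; split; last by exists (fun k => edge_elt a (enum_val k)); exact: free_ab_basis_kerQ.
have -> : n_components X = #|roots (adj (lam_edges X))|.
  by apply: eq_card => x; rewrite !inE (eq_roots (lam_rel_adj X)).
by move: cardR; rewrite card_sum !card_ord card_lam_edges -addnA [(n + m)%N]addnC.
Qed.
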